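(* Let $a,b$ be coprime integers with $\tfrac{a}{b}<0$ and $-a>b>2$, and let $\mathcal{D}=\{0,1,\ldots,|a|-1\}$. Let $N=N_0\in\mathbb{Z}$ and define integers $N_1,N_2,\ldots$ and digits $d_0,d_1,\ldots\in\mathcal{D}$ recursively by $$bN_j=aN_{j+1}+d_j,$$ where $d_j\in\mathcal{D}$ is the unique digit with $d_j\equiv bN_j \pmod{a}$ (so that $N_{j+1}=(bN_j-d_j)/a\in\mathbb{Z}$). Then the sequence $(N_j)_{j\ge 0}$ is eventually zero. *)

From Stdlib Require Import ZArith.
Open Scope Z_scope.

Definition digit (a b N : Z) : Z := (b * N) mod (Z.abs a).

Definition step (a b N : Z) : Z := (b * N - digit a b N) / a.

Fixpoint Nseq (a b N : Z) (j : nat) : Z :=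
  match j with
  | O => N
  | S j' => step a b (Nseq a b N j')
  end.

(* With m = -a > 0 the digit is bN mod m, so one step is N |-> -floor(bN/m).
   Since 0 <= b < m, a step never increases |N|, strictly decreases it when
   N > 0, and maps N <= 0 to a non-negative value.  Hence two consecutive steps
   strictly decrease |N| unless N = 0, which is fixed, and the sequence reaches
   0. *)

From Stdlib Require Import ZArith Lia.
Open Scope Z_scope.

Lemma Nseq_add a b N j k : Nseq a b N (j + k) = Nseq a b (Nseq a b N j) k.
Proof.
  induction k as [|k IH].
  - now rewrite Nat.add_0_r.
  - rewrite Nat.add_succ_r. simpl. now rewrite IH.
Qed.

Section Expansion.

Variables a b : Z.
Hypothesis a_neg : a < 0.
Hypothesis b_ge0 : 0 <= b.
Hypothesis b_lt_abs_a : b < - a.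

Lemma step_eq N : step a b N = - (b * N / - a).
Proof.
  unfold step, digit. rewrite Z.abs_neq by lia.
  rewrite (Z.div_mod (b * N) (- a)) at 1 by lia.
  replace (- a * (b * N / - a) + b * N mod - a - b * N mod - a)
    with (- (b * N / - a) * a) by ring.
  now rewrite Z.div_mul by lia.
Qed.

Lemma step_abs_le N : Z.abs (step a b N) <= Z.abs N /\ (0 < N -> Z.abs (step a b N) < N).
Proof.
  rewrite step_eq.
  pose proof (Z.div_mod (b * N) (- a) ltac:(lia)).
  pose proof (Z.mod_pos_bound (b * N) (- a) ltac:(lia)).
  split; [|intros]; nia.
Qed.

Lemma step_nonneg N : N <= 0 -> 0 <= step a b N.
Proof.
  intros HN. rewrite step_eq.
  assert (b * N / - a <= 0) by (apply Z.div_le_upper_bound; nia).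
  lia.
Qed.

Lemma step0 : step a b 0 = 0.
Proof. pose proof (proj1 (step_abs_le 0)). lia. Qed.

Lemma step2_abs_lt N : N <> 0 -> Z.abs (step a b (step a b N)) < Z.abs N.
Proof.
  intros HN.
  destruct (step_abs_le N) as [le1 lt1].
  destruct (step_abs_le (step a b N)) as [le2 lt2].
  destruct (proj1 (Z.lt_gt_cases N 0) HN) as [Hneg | Hpos].
  - pose proof (step_nonneg N ltac:(lia)).
    destruct (Z.eq_dec (step a b N) 0) as [E | E].
    + rewrite E, step0. lia.
    + specialize (lt2 ltac:(lia)). lia.
  - specialize (lt1 Hpos). lia.
Qed.

Lemma Nseq_reaches_zero N : exists J, Nseq a b N J = 0.
Proof.
  induction N as [N IH] using (well_founded_induction
    (Wf_nat.well_founded_ltof Z (fun N => Z.to_nat (Z.abs N)))).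
  destruct (Z.eq_dec N 0) as [-> | HN]; [now exists O |].
  destruct (IH (step a b (step a b N))) as [J HJ].
  { unfold Wf_nat.ltof. pose proof (step2_abs_lt N HN). lia. }
  exists (2 + J)%nat. now rewrite Nseq_add.
Qed.

Lemma Nseq_from_zero j : Nseq a b 0 j = 0.
Proof. induction j as [|j IH]; [reflexivity |]. simpl. now rewrite IH, step0. Qed.

Lemma Nseq_eventually_zero N :
  exists J : nat, forall j : nat, (J <= j)%nat -> Nseq a b N j = 0.
Proof.
  destruct (Nseq_reaches_zero N) as [J HJ].
  exists J. intros j Hj.
  replace j with (J + (j - J))%nat by lia.
  now rewrite Nseq_add, HJ, Nseq_from_zero.
Qed.

End Expansion.

Theorem mainTheorem1 (a b N : Z) :
  Z.gcd a b = 1 -> a * b < 0 -> - a > b -> b > 2 ->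
  exists J : nat, forall j : nat, (J <= j)%nat -> Nseq a b N j = 0.
Proof.
  intros _ _ Hab Hb.
  apply Nseq_eventually_zero; lia.
Qed.
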